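(* In the setting described in the context, there exists a constant $C$ (independent of $\gamma$ and $\lambda_0$) such that for every $\gamma \in (0,\frac12)$, every $\lambda_0 > 1$ and every $0 \leq k \leq q$: $|d\hat u_k| \leq C$ at each point of $\mathbb{R}^n$; $\hat u_k$ is a convex function; and the Euclidean Hessian of $\hat u_k$ is bounded in norm by $C\lambda_k$ at each point of $\mathbb{R}^n$.
   Context: $n\ge 3$, $u_0,\dots,u_q$ are non-constant linear (affine) functions on $\mathbb{R}^n$ whose Euclidean gradients are unit vectors, and $\Omega=\bigcap_{m=0}^q\{u_m\le 0\}$ is a compact convex polytope with non-empty interior. Fix a smooth even function $\eta:\mathbb{R}\to\mathbb{R}$ with $\eta(t)=|t|$ for $|t|\ge \frac12$ and $\eta''\ge 0$ everywhere. For $\gamma\in(0,\frac12)$ and $\lambda_0>1$ set $\lambda_0$ as given and $\lambda_k=\gamma^{-k}\lambda_0$ for $1\le k\le q$. Define $\hat u_0=u_0$ and, for $1\le k\le q$, $\hat u_k=\frac12\big(\hat u_{k-1}+u_k+\lambda_k^{-1}\eta(\lambda_k(\hat u_{k-1}-u_k))\big)$. *)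

From HB Require Import structures.
From mathcomp Require Import all_boot all_order all_algebra.
From mathcomp Require Import all_classical all_reals all_analysis.
Set Implicit Arguments. Unset Strict Implicit. Unset Printing Implicit Defensive.
Import Order.TTheory GRing.Theory Num.Theory.
Import numFieldNormedType.Exports.
Local Open Scope ring_scope.
Local Open Scope classical_set_scope.

Section Defs.
Variables (R : realType) (n : nat).

Definition dotv (v w : 'rV[R]_n) : R := \sum_(i < n) v ord0 i * w ord0 i.
Definition enorm (v : 'rV[R]_n) : R := Num.sqrt (dotv v v).

Definition evec (i : 'I_n) : 'rV[R]_n := delta_mx ord0 i.

Definition affine_fun (a : 'rV[R]_n) (b : R) (x : 'rV[R]_n) : R := dotv a x + b.

Definition grad (f : 'rV[R]_n -> R) (x : 'rV[R]_n) : 'rV[R]_n :=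
  \row_i derive f x (evec i).
Definition hess (f : 'rV[R]_n -> R) (x : 'rV[R]_n) : 'M[R]_n :=
  \matrix_(i, j) derive (fun y => derive f y (evec i)) x (evec j).

Definition bilin (H : 'M[R]_n) (v w : 'rV[R]_n) : R :=
  \sum_(i < n) \sum_(j < n) v ord0 i * H i j * w ord0 j.

Definition convex_fun (f : 'rV[R]_n -> R) : Prop :=
  forall x y (t : R), 0 <= t -> t <= 1 ->
    f (t *: x + (1 - t) *: y) <= t * f x + (1 - t) * f y.

Definition lam (gamma lambda0 : R) (k : nat) : R := gamma ^- k * lambda0.

Fixpoint uhat (eta : R -> R) (a : nat -> 'rV[R]_n) (b : nat -> R)
    (gamma lambda0 : R) (k : nat) (x : 'rV[R]_n) : R :=
  match k with
  | 0 => affine_fun (a 0) (b 0) x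
  | k'.+1 =>
      let p := uhat eta a b gamma lambda0 k' x in
      let uk := affine_fun (a k) (b k) x in
      let l := lam gamma lambda0 k in
      2^-1 * (p + uk + l^-1 * eta (l * (p - uk)))
  end.

End Defs.

Definition smooth_fun (R : realType) (f : R -> R) : Prop :=
  forall (m : nat) (t : R), derivable (derive1n m f) t 1.

(* Write [smax l P U = (P + U + eta (l (P - U)) / l) / 2]: since [eta t = |t|]
   for [|t| >= 1/2], this is [max P U = (P + U + |P - U|) / 2] smoothed at
   scale [1/l], and [uhat_(k+1) = smax lambda_(k+1) uhat_k u_(k+1)].
   From [eta'' >= 0] and [eta' = +-1] off [[-1/2, 1/2]] we get [|eta'| <= 1],
   convexity of [eta], and a bound [eta'' <= M] ([eta''] is continuous and
   vanishes off [[-1/2, 1/2]]).  Hence [smax l] is convex and nondecreasing in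
   its first argument, and its first derivatives are convex combinations of
   those of its arguments, so by induction every [uhat_k] is convex and
   1-Lipschitz.  Differentiating twice, with [l = lambda_(k+1)],
     [D_w D_v uhat_(k+1) = ((1 + eta') D_w D_v uhat_k
                            + l eta'' D_w (uhat_k - u) D_v (uhat_k - u)) / 2].
   If [|D_w D_v uhat_k| <= 4 M lambda_k |v| |w|], the first term is at most
   [4 M gamma l |v| |w| <= 2 M l |v| |w|] as [gamma < 1/2], and the second at
   most [l M (2 |v|) (2 |w|) / 2 = 2 M l |v| |w|]: the Hessian bound
   [4 M lambda_k] propagates. *)
From mathcomp Require Import all_boot all_order all_algebra.
From mathcomp Require Import all_classical all_reals all_analysis.
From mathcomp Require Import ring lra.
Import Order.TTheory GRing.Theory Num.Theory.
Import numFieldNormedType.Exports.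
Set Implicit Arguments.
Unset Strict Implicit.
Unset Printing Implicit Defensive.

Local Open Scope ring_scope.
Local Open Scope classical_set_scope.

Section SoftAbs.
Variables (R : realType) (eta : R -> R).
Hypothesis eta_smooth : smooth_fun eta.
Hypothesis eta_abs : forall t, 2^-1 <= `|t| -> eta t = `|t|.
Hypothesis eta''_ge0 : forall t, 0 <= derive1n 2 eta t.

Lemma derivable_eta t : derivable eta t 1.
Proof. exact: (@eta_smooth 0%N). Qed.

Lemma derivable_eta' t : derivable eta^`() t 1.
Proof. exact: (@eta_smooth 1%N). Qed.

Lemma eta'_gt t : 2^-1 < t -> eta^`() t = 1.
Proof.
move=> ht; rewrite derive1E (@near_eq_derive _ _ _ _ id) ?derive_id //.
have h0 : (0 : R) < 2^-1 by rewrite invr_gt0.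
near=> s; have hs : 2^-1 < s by near: s; exact: lt_nbhsr.
by rewrite eta_abs gtr0_norm //; lra.
Unshelve. all: by end_near. Qed.

Lemma eta'_lt t : t < - 2^-1 -> eta^`() t = -1.
Proof.
move=> ht; rewrite derive1E (@near_eq_derive _ _ _ _ -%R) ?derive_val //.
have h0 : (0 : R) < 2^-1 by rewrite invr_gt0.
near=> s; have hs : s < - 2^-1 by near: s; exact: lt_nbhsl.
by rewrite eta_abs ltr0_norm //; lra.
Unshelve. all: by end_near. Qed.

Lemma eta''_eq0 t : 2^-1 < `|t| -> eta^`()^`() t = 0.
Proof.
move=> ht; rewrite derive1E.
have [t0|t0] := leP 0 t.
  rewrite ger0_norm // in ht.
  rewrite (@near_eq_derive _ _ _ eta^`() (cst 1)) ?derive_cst //.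
  by near=> s; rewrite eta'_gt //; near: s; exact: lt_nbhsr.
rewrite ltr0_norm // ltrNr in ht.
rewrite (@near_eq_derive _ _ _ eta^`() (cst (-1))) ?derive_cst //.
by near=> s; rewrite eta'_lt //; near: s; exact: lt_nbhsl.
Unshelve. all: by end_near. Qed.

Lemma eta'_nondecr : {homo eta^`() : x y / x <= y}.
Proof.
move=> x y xy; apply: (@ger0_derive1_ndecr _ _ x y) => // [z _|z _|].
- exact: derivable_eta'.
- exact: eta''_ge0.
- by apply: derivable_within_continuous => z _; exact: derivable_eta'.
Qed.

Lemma normr_eta'_le1 t : `|eta^`() t| <= 1.
Proof.
have h1 : (2^-1 : R) < 1 by rewrite invf_lt1 // ltr1n.
have := ler_norm t; have := ler_norm (- t); rewrite normrN => tN tP.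
have lo : eta^`() (- `|t| - 1) = -1 by apply: eta'_lt; lra.
have hi : eta^`() (`|t| + 1) = 1 by apply: eta'_gt; lra.
rewrite ler_norml; apply/andP; split.
  by rewrite -lo eta'_nondecr //; lra.
by rewrite -hi eta'_nondecr //; lra.
Qed.

Lemma eta''_bounded : exists M, forall t, eta^`()^`() t <= M.
Proof.
have [||c _ maxc] := @EVT_max R eta^`()^`() (-1) 1; first lra.
  by apply: derivable_within_continuous => z _; exact: (@eta_smooth 2%N).
exists (eta^`()^`() c) => t; have [t1|t1] := leP `|t| 1.
  by apply: maxc; rewrite in_itv /= -ler_norml.
rewrite eta''_eq0; first exact: eta''_ge0.
by apply: lt_trans t1; rewrite invf_lt1 // ltr1n.
Qed.

Lemma add_eta_nondecr : {homo (fun t => t + eta t) : x y / x <= y}.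
Proof.
have dD t : derivable (fun s => s + eta s) t 1.
  by apply: (@derivableD _ _ _ id eta); [exact: derivable_id|exact: derivable_eta].
move=> x y xy; apply: (@ger0_derive1_ndecr _ (fun t => t + eta t) x y) => // [z _|].
  rewrite derive1E (@deriveD _ _ _ id eta) ?derive_id -?derive1E //.
    by have := normr_eta'_le1 z; rewrite ler_norml; lra.
  exact: derivable_eta.
by apply: derivable_within_continuous => z _.
Qed.

Lemma eta_convex x y t : 0 <= t -> t <= 1 ->
  eta (t * x + (1 - t) * y) <= t * eta x + (1 - t) * eta y.
Proof.
wlog xy : x y t / x <= y => [hwlog t0 t1|t0 t1].
  have [/hwlog|/ltW/hwlog] := leP x y; first exact.
  move=> /(_ (1 - t)); rewrite subKr (addrC ((1 - t) * _)) (addrC ((1 - t) * eta _)).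
  by apply; lra.
have D1 : 'D_1 eta = eta^`() by apply/funext => z; rewrite derive1E.
have : eta (conv (Itv01 t0 t1) (x : R^o) y) <=
       conv (Itv01 t0 t1) (eta x : R^o) (eta y : R^o).
  apply: second_derivative_convex => // [z _|||z _|z _].
  - by rewrite D1 -derive1E; exact: eta''_ge0.
  - apply/cvg_at_left_filter/differentiable_continuous.
    exact/derivable1_diffP/derivable_eta.
  - apply/cvg_at_right_filter/differentiable_continuous.
    exact/derivable1_diffP/derivable_eta.
  - exact: derivable_eta.
  - by rewrite D1; exact: derivable_eta'.
by rewrite !convRE.
Qed.

Definition smax (l P U : R) : R := 2^-1 * (P + U + l^-1 * eta (l * (P - U))).

Lemma smax_nondecrl l U : 0 < l -> {homo smax l ^~ U : P P' / P <= P'}.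
Proof.
move=> l0 P P' PP'.
have E Q : smax l Q U = 2^-1 * (l^-1 * (l * (Q - U) + eta (l * (Q - U))) + 2 * U).
  by rewrite /smax; field; rewrite gt_eqF.
rewrite !E ler_pM2l ?invr_gt0 // lerD2r ler_pM2l ?invr_gt0 //.
by apply: add_eta_nondecr; rewrite ler_pM2l // lerD2r.
Qed.

Lemma smax_convex l P1 U1 P2 U2 t : 0 < l -> 0 <= t -> t <= 1 ->
  smax l (t * P1 + (1 - t) * P2) (t * U1 + (1 - t) * U2) <=
  t * smax l P1 U1 + (1 - t) * smax l P2 U2.
Proof.
move=> l0 t0 t1; rewrite /smax.
have -> : l * (t * P1 + (1 - t) * P2 - (t * U1 + (1 - t) * U2)) =
  t * (l * (P1 - U1)) + (1 - t) * (l * (P2 - U2)) by ring.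
have := eta_convex (l * (P1 - U1)) (l * (P2 - U2)) t0 t1.
have il : 0 < l^-1 by rewrite invr_gt0.
rewrite -(ler_pM2l il); lra.
Qed.
End SoftAbs.

Section Euclid.
Variables (R : realType) (n : nat).
Implicit Types (x y : 'rV[R]_n).

Lemma dotv_ge0 x : 0 <= dotv x x.
Proof. by apply: sumr_ge0 => i _; rewrite -expr2 sqr_ge0. Qed.

Lemma enorm_ge0 x : 0 <= enorm x.
Proof. exact: sqrtr_ge0. Qed.

Lemma enorm_sqr x : enorm x ^+ 2 = dotv x x.
Proof. by rewrite sqr_sqrtr // dotv_ge0. Qed.

Lemma dotv_lagrange x y :
  \sum_(i < n) \sum_(j < n) (x ord0 i * y ord0 j - x ord0 j * y ord0 i) ^+ 2 =
  2 * (dotv x x * dotv y y - dotv x y ^+ 2).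
Proof.
have -> : 2 * (dotv x x * dotv y y - dotv x y ^+ 2) =
    dotv x x * dotv y y + dotv y y * dotv x x - 2 * dotv x y ^+ 2 by ring.
rewrite expr2 /dotv !big_distrlr mulr_sumr -big_split -sumrB /=.
apply: eq_bigr => i _; rewrite mulr_sumr -big_split -sumrB /=.
by apply: eq_bigr => j _; ring.
Qed.

Lemma normr_dotv_le x y : `|dotv x y| <= enorm x * enorm y.
Proof.
have : 0 <= dotv x x * dotv y y - dotv x y ^+ 2.
  rewrite -(pmulr_rge0 _ (ltr0n R 2)) -dotv_lagrange.
  by do 2!(apply: sumr_ge0 => ? _); exact: sqr_ge0.
rewrite subr_ge0 -!enorm_sqr -exprMn -real_normK ?num_real // ler_pXn2r //.
by rewrite nnegrE mulr_ge0 ?enorm_ge0.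
Qed.
End Euclid.

Section PointwiseCalculus.
Variables (R : realType) (n : nat).
Local Notation V := 'rV[R]_n.
Implicit Types (f g : V -> R) (x v : V).

Lemma differentiable_addf f g x : differentiable f x -> differentiable g x ->
  differentiable (fun y => f y + g y) x.
Proof. exact: differentiableD. Qed.

Lemma differentiable_subf f g x : differentiable f x -> differentiable g x ->
  differentiable (fun y => f y - g y) x.
Proof. exact: differentiableB. Qed.

Lemma differentiable_mulf f g x : differentiable f x -> differentiable g x ->
  differentiable (fun y => f y * g y) x.
Proof. exact: differentiableM. Qed.

Lemma differentiable_cstf (c : R) x : differentiable (fun _ : V => c) x.
Proof. exact: differentiable_cst. Qed.

Lemma differentiable_compR (h : R -> R) f x :
  differentiable f x -> derivable h (f x) 1 -> differentiable (fun y => h (f y)) x.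
Proof. by move=> df /derivable1_diffP dh; exact: differentiable_comp. Qed.

Lemma derive_addf f g x v : differentiable f x -> differentiable g x ->
  'D_v (fun y => f y + g y) x = 'D_v f x + 'D_v g x.
Proof. by move=> df dg; apply: deriveD; exact: diff_derivable. Qed.

Lemma derive_subf f g x v : differentiable f x -> differentiable g x ->
  'D_v (fun y => f y - g y) x = 'D_v f x - 'D_v g x.
Proof. by move=> df dg; apply: deriveB; exact: diff_derivable. Qed.

Lemma derive_mulf f g x v : differentiable f x -> differentiable g x ->
  'D_v (fun y => f y * g y) x = f x * 'D_v g x + g x * 'D_v f x.
Proof. by move=> df dg; apply: deriveM; exact: diff_derivable. Qed.

Lemma derive_cstf (c : R) x v : 'D_v (fun _ : V => c) x = 0.
Proof. exact: derive_cst. Qed.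

Lemma derive_scalef (c : R) f x v : differentiable f x ->
  'D_v (fun y => c * f y) x = c * 'D_v f x.
Proof. by move=> df; rewrite derive_mulf ?derive_cstf ?mulr0 ?addr0. Qed.

Lemma derive_compR (h : R -> R) f x v :
  differentiable f x -> derivable h (f x) 1 ->
  'D_v (fun y => h (f y)) x = 'D_v f x * derive1 h (f x).
Proof.
move=> df /derivable1_diffP dh.
rewrite deriveE; last exact: differentiable_comp.
by rewrite diff_comp //= diff1E -?deriveE.
Qed.

Lemma derive_sum_evec f x v : differentiable f x ->
  'D_v f x = \sum_(i < n) v ord0 i * 'D_(evec R i) f x.
Proof.
move=> df; rewrite deriveE // {1}(row_sum_delta v) linear_sum.
by apply: eq_bigr => i _; rewrite linearZ -deriveE.
Qed.

Lemma derive_coord i x v : 'D_v (fun y : V => y ord0 i) x = v ord0 i.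
Proof.
have := @derive_mx R V 1 n id x v (@derivable_id _ _ _ _).
by rewrite derive_id => /(congr1 (fun M : 'M[R]_(1, n) => M ord0 i)); rewrite mxE.
Qed.

Lemma dotv_sum_coord (a : V) :
  dotv a = \sum_(i < n) (fun y : V => a ord0 i * y ord0 i).
Proof. by apply/funext => y; rewrite fct_sumE. Qed.

Lemma differentiable_dotv (a : V) x : differentiable (dotv a) x.
Proof.
rewrite dotv_sum_coord; apply: differentiable_sum => i.
exact/differentiable_mulf/differentiable_coord/differentiable_cstf.
Qed.

Lemma derive_dotv (a : V) x v : 'D_v (dotv a) x = dotv a v.
Proof.
have dc i : differentiable (fun y : V => a ord0 i * y ord0 i) x.
  exact/differentiable_mulf/differentiable_coord/differentiable_cstf.
rewrite {1}dotv_sum_coord derive_sum => [|i]; last exact: diff_derivable.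
by apply: eq_bigr => i _; rewrite derive_scalef ?derive_coord //; exact: differentiable_coord.
Qed.

Lemma differentiable_affine_fun (a : V) b x : differentiable (affine_fun a b) x.
Proof. exact/differentiable_addf/differentiable_cstf/differentiable_dotv. Qed.

Lemma derive_affine_fun (a : V) b x v : 'D_v (affine_fun a b) x = dotv a v.
Proof.
rewrite derive_addf ?derive_cstf ?addr0 ?derive_dotv //.
exact: differentiable_dotv.
Qed.

Lemma enorm_grad_le f x (c : R) : 0 <= c -> differentiable f x ->
  (forall v, `|'D_v f x| <= c * enorm v) -> enorm (grad f x) <= c.
Proof.
move=> c0 df Df; have g0 := enorm_ge0 (grad f x).
have sq : enorm (grad f x) ^+ 2 = 'D_(grad f x) f x.
  rewrite enorm_sqr (derive_sum_evec _ df) /dotv.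
  by apply: eq_bigr => i _; rewrite mxE.
have := Df (grad f x); rewrite -sq normrX ger0_norm // expr2.
by have [->|gt0] := eqVneq (enorm (grad f x)) 0; [|rewrite ler_pM2r ?lt_def ?gt0].
Qed.

Lemma bilin_hess f x v w : (forall y, differentiable f y) ->
  (forall i, differentiable ('D_(evec R i) f) x) ->
  bilin (hess f x) v w = 'D_w ('D_v f) x.
Proof.
move=> df ddf.
have dvi i : differentiable (fun y => v ord0 i * 'D_(evec R i) f y) x.
  exact/differentiable_mulf/ddf/differentiable_cstf.
have -> : 'D_v f = \sum_(i < n) (fun y => v ord0 i * 'D_(evec R i) f y).
  by apply/funext => y; rewrite fct_sumE derive_sum_evec.
rewrite derive_sum => [|i]; last exact: diff_derivable.
apply: eq_bigr => i _; rewrite derive_scalef // (derive_sum_evec _ (ddf i)).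
by rewrite mulr_sumr; apply: eq_bigr => j _; rewrite mxE [w _ _ * _]mulrC mulrA.
Qed.
End PointwiseCalculus.

Section SmaxAffineStep.
Variables (R : realType) (n : nat) (eta : R -> R).
Hypothesis eta_smooth : smooth_fun eta.
Variables (l : R) (a : 'rV[R]_n) (b : R) (p : 'rV[R]_n -> R).
Hypothesis l_neq0 : l != 0.
Hypothesis p_diff : forall x, differentiable p x.
Hypothesis Dp_diff : forall v x, differentiable ('D_v p) x.

Local Notation f := (fun y => smax eta l (p y) (affine_fun a b y)).
Local Notation s y := (l * (p y - affine_fun a b y)).

(* [_ - _] is tried before [_ + _], of which it is an instance. *)
Ltac differentiable_step := repeat match goal with
  | |- differentiable (fun _ => _) _ => exact: differentiable_cstf
  | |- differentiable p _ => exact: p_diff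
  | |- differentiable ('D_ _ p) _ => exact: Dp_diff
  | |- differentiable (affine_fun _ _) _ => exact: differentiable_affine_fun
  | |- differentiable (dotv _) _ => exact: differentiable_dotv
  | |- differentiable (fun y => @?A y - @?B y) _ => apply: differentiable_subf
  | |- differentiable (fun y => @?A y + @?B y) _ => apply: differentiable_addf
  | |- differentiable (fun y => @?A y * @?B y) _ => apply: differentiable_mulf
  | |- differentiable (fun y => eta (@?A y)) _ =>
      apply: differentiable_compR; last exact: (@eta_smooth 0%N)
  | |- differentiable (fun y => derive1 eta (@?A y)) _ =>
      apply: differentiable_compR; last exact: (@eta_smooth 1%N)
  end.

Lemma differentiable_smax_step x : differentiable f x.
Proof. rewrite /smax; differentiable_step. Qed.

Lemma derive_smax_step x v : 'D_v f x =
  2^-1 * ('D_v p x + dotv a v + derive1 eta (s x) * ('D_v p x - dotv a v)).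
Proof.
rewrite /smax derive_scalef; last by differentiable_step.
rewrite !derive_addf; try by differentiable_step.
rewrite derive_scalef; last by differentiable_step.
rewrite derive_compR; [|by differentiable_step|exact: (@eta_smooth 0%N)].
rewrite derive_scalef; last by differentiable_step.
rewrite derive_subf ?derive_affine_fun ?derive_dotv ?derive_cstf; try by differentiable_step.
by congr (_ * _); field.
Qed.

Lemma derive_smax_stepE v : 'D_v f = fun y =>
  2^-1 * ('D_v p y + dotv a v + derive1 eta (s y) * ('D_v p y - dotv a v)).
Proof. by apply/funext => y; rewrite derive_smax_step. Qed.

Lemma differentiable_derive_smax_step v x : differentiable ('D_v f) x.
Proof. rewrite derive_smax_stepE; differentiable_step. Qed.

Lemma derive2_smax_step v w x : 'D_w ('D_v f) x =
  2^-1 * ((1 + derive1 eta (s x)) * 'D_w ('D_v p) x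
    + l * derive1 (derive1 eta) (s x) * ('D_w p x - dotv a w) * ('D_v p x - dotv a v)).
Proof.
rewrite derive_smax_stepE derive_scalef; last by differentiable_step.
rewrite !derive_addf ?derive_cstf; try by differentiable_step.
rewrite derive_mulf ?derive_subf ?derive_cstf; try by differentiable_step.
rewrite derive_compR; [|by differentiable_step|exact: (@eta_smooth 1%N)].
rewrite derive_scalef; last by differentiable_step.
rewrite derive_subf ?derive_affine_fun; try by differentiable_step.
by congr (_ * _); ring.
Qed.
End SmaxAffineStep.

Section Control.
Variables (R : realType) (n : nat).
Implicit Types (K l : R) (a x y : 'rV[R]_n) (p : 'rV[R]_n -> R).

Definition controlled K l p : Prop :=
  [/\ forall x, differentiable p x,
      forall x v, `|'D_v p x| <= enorm v,
      forall x v, differentiable ('D_v p) x,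
      forall x v w, `|'D_w ('D_v p) x| <= K * l * enorm v * enorm w
    & convex_fun p].

Lemma affine_fun_conv a b x y (t : R) :
  affine_fun a b (t *: x + (1 - t) *: y) =
  t * affine_fun a b x + (1 - t) * affine_fun a b y.
Proof.
rewrite /affine_fun /dotv !mulrDr addrACA -mulrDl subrKC mul1r !mulr_sumr -big_split.
by congr (_ + _); apply: eq_bigr => i _ /=; rewrite !mxE; ring.
Qed.

Lemma normr_dotv_unit a v : enorm a = 1 -> `|dotv a v| <= enorm v.
Proof. by move=> a1; have := normr_dotv_le a v; rewrite a1 mul1r. Qed.

Lemma controlled_affine K l a b : enorm a = 1 -> 0 <= K * l ->
  controlled K l (affine_fun a b).
Proof.
move=> a1 Kl; have D1 v : 'D_v (affine_fun a b) = fun _ => dotv a v.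
  by apply/funext => y; rewrite derive_affine_fun.
split=> [x|x v|x v|x v w|x y t _ _].
- exact: differentiable_affine_fun.
- by rewrite derive_affine_fun normr_dotv_unit.
- by rewrite D1; exact: differentiable_cstf.
- by rewrite D1 derive_cstf normr0; do 2?apply: mulr_ge0 => //; exact: enorm_ge0.
- by rewrite affine_fun_conv.
Qed.

Lemma normr_half_mix_le (X Y e c : R) : `|X| <= c -> `|Y| <= c -> `|e| <= 1 ->
  `|2^-1 * (X + Y + e * (X - Y))| <= c.
Proof.
rewrite !ler_norml => /andP[X1 X2] /andP[Y1 Y2] /andP[e1 e2].
have -> : 2^-1 * (X + Y + e * (X - Y)) = ((1 + e) * X + (1 - e) * Y) / 2 by field.
by rewrite ler_pdivlMr // ler_pdivrMr //; apply/andP; split; nra.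
Qed.
End Control.

Section ControlStep.
Variables (R : realType) (n : nat) (eta : R -> R).
Hypothesis eta_smooth : smooth_fun eta.
Hypothesis eta_abs : forall t, 2^-1 <= `|t| -> eta t = `|t|.
Hypothesis eta''_ge0 : forall t, 0 <= derive1n 2 eta t.
Variables (M K l l' : R) (a : 'rV[R]_n) (b : R) (p : 'rV[R]_n -> R).
Hypothesis eta''_le : forall t, eta^`()^`() t <= M.
Hypothesis KM : 4 * M <= K.
Hypothesis l_gt0 : 0 < l.
Hypothesis ll' : 2 * l' <= l.
Hypothesis a_unit : enorm a = 1.
Hypothesis p_ctrl : controlled K l' p.

Local Notation f := (fun y => smax eta l (p y) (affine_fun a b y)).

Let l_neq0 : l != 0. Proof. by rewrite gt_eqF. Qed.

Let K_ge0 : 0 <= K.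
Proof.
have M0 : 0 <= M := le_trans (eta''_ge0 0) (eta''_le 0).
by apply: le_trans KM; rewrite mulr_ge0.
Qed.

Let p_diff x : differentiable p x. Proof. by case: p_ctrl. Qed.

Let Dp_diff v x : differentiable ('D_v p) x. Proof. by case: p_ctrl. Qed.

Let normr_derive_sub_le x v : `|'D_v p x - dotv a v| <= 2 * enorm v.
Proof.
case: p_ctrl => _ Dp_bd _ _ _; apply: le_trans (ler_normB _ _) _.
by have := Dp_bd x v; have := normr_dotv_unit v a_unit; lra.
Qed.

Lemma normr_derive_smax_step_le x v : `|'D_v f x| <= enorm v.
Proof.
case: p_ctrl => _ Dp_bd _ _ _.
rewrite derive_smax_step //; apply: normr_half_mix_le => //.
  exact: normr_dotv_unit.
exact: normr_eta'_le1.
Qed.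

Lemma normr_derive2_smax_step_le x v w :
  `|'D_w ('D_v f) x| <= K * l * enorm v * enorm w.
Proof.
case: p_ctrl => _ _ _ D2p_bd _; rewrite derive2_smax_step //.
set e2 := derive1 (derive1 eta) _; set e := derive1 eta _.
set B := 'D_w _ x; set X := _ - dotv a w; set Y := _ - dotv a v.
have nv0 := enorm_ge0 v; have nw0 := enorm_ge0 w.
have /andP[e_lb e_ub] : -1 <= e <= 1.
  by rewrite -ler_norml; exact: normr_eta'_le1.
have e20 : 0 <= e2 by exact: eta''_ge0.
have e1 : 0 <= 1 + e by lra.
have hB : (1 + e) * `|B| <= K * l * enorm v * enorm w.
  apply: (@le_trans _ _ (2 * (K * l' * enorm v * enorm w))).
    apply: ler_pM => //; first lra.
    exact: D2p_bd.
  have -> : 2 * (K * l' * enorm v * enorm w) = 2 * l' * (K * enorm v * enorm w) by ring.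
  have -> : K * l * enorm v * enorm w = l * (K * enorm v * enorm w) by ring.
  by rewrite ler_wpM2r // !mulr_ge0.
have hXY : l * e2 * (`|X| * `|Y|) <= K * l * enorm v * enorm w.
  apply: (@le_trans _ _ (l * M * (2 * enorm w * (2 * enorm v)))).
    apply: ler_pM.
    - by rewrite mulr_ge0 // ltW.
    - by rewrite mulr_ge0.
    - by rewrite ler_pM2l //; exact: eta''_le.
    - by apply: ler_pM; rewrite ?normr_derive_sub_le.
  have -> : l * M * (2 * enorm w * (2 * enorm v)) = 4 * M * (l * enorm v * enorm w).
    by ring.
  have -> : K * l * enorm v * enorm w = K * (l * enorm v * enorm w) by ring.
  by rewrite ler_wpM2r // !mulr_ge0 // ltW.
rewrite normrM ger0_norm ?invr_ge0 //.
apply: (@le_trans _ _ (2^-1 * ((1 + e) * `|B| + l * e2 * (`|X| * `|Y|)))); last lra.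
rewrite ler_pM2l ?invr_gt0 //; apply: le_trans (ler_normD _ _) _.
by rewrite !normrM (ger0_norm e1) (gtr0_norm l_gt0) (ger0_norm e20) -!mulrA.
Qed.

Lemma convex_smax_step : convex_fun f.
Proof.
case: p_ctrl => _ _ _ _ p_cvx x y t t0 t1; rewrite affine_fun_conv.
apply: (le_trans _ (smax_convex eta_smooth eta''_ge0 _ _ _ _ l_gt0 t0 t1)).
exact/(smax_nondecrl eta_smooth eta_abs eta''_ge0 _ l_gt0)/p_cvx.
Qed.

Lemma controlled_smax_step : controlled K l f.
Proof.
split=> [x|x v|x v|x v w|].
- exact: differentiable_smax_step.
- exact: normr_derive_smax_step_le.
- exact: differentiable_derive_smax_step.
- exact: normr_derive2_smax_step_le.
- exact: convex_smax_step.
Qed.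
End ControlStep.

Lemma lam_gt0 (R : realType) (gamma lambda0 : R) k :
  0 < gamma -> 0 < lambda0 -> 0 < lam gamma lambda0 k.
Proof. by move=> g0 l0; rewrite mulr_gt0 ?invr_gt0 ?exprn_gt0. Qed.

Lemma lam_double_le (R : realType) (gamma lambda0 : R) k :
  0 < gamma -> gamma <= 2^-1 -> 0 <= lambda0 ->
  2 * lam gamma lambda0 k <= lam gamma lambda0 k.+1.
Proof.
move=> g0 g1 l0; rewrite /lam exprS invfM !mulrA.
apply: ler_wpM2r => //; apply: ler_wpM2r; first by rewrite invr_ge0 exprn_ge0 ?ltW.
by rewrite -[2]invrK lef_pV2 ?posrE ?invr_gt0.
Qed.

Lemma uhatS (R : realType) n eta (a : nat -> 'rV[R]_n) b gamma lambda0 k :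
  uhat eta a b gamma lambda0 k.+1 = fun x =>
    smax eta (lam gamma lambda0 k.+1) (uhat eta a b gamma lambda0 k x)
      (affine_fun (a k.+1) (b k.+1) x).
Proof. by []. Qed.

Section UhatControl.
Variables (R : realType) (n q : nat) (a : nat -> 'rV[R]_n) (b : nat -> R).
Variables (eta : R -> R) (M K gamma lambda0 : R).
Hypothesis a_unit : forall m, (m <= q)%N -> enorm (a m) = 1.
Hypothesis eta_smooth : smooth_fun eta.
Hypothesis eta_abs : forall t, 2^-1 <= `|t| -> eta t = `|t|.
Hypothesis eta''_ge0 : forall t, 0 <= derive1n 2 eta t.
Hypothesis eta''_le : forall t, eta^`()^`() t <= M.
Hypothesis KM : 4 * M <= K.
Hypotheses (gamma_gt0 : 0 < gamma) (gamma_le : gamma <= 2^-1) (lambda0_gt0 : 0 < lambda0).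

Lemma controlled_uhat k : (k <= q)%N ->
  controlled K (lam gamma lambda0 k) (uhat eta a b gamma lambda0 k).
Proof.
elim: k => [|k IH] kq.
  apply: controlled_affine; first exact: a_unit.
  apply: mulr_ge0; last exact/ltW/lam_gt0.
  by apply: le_trans KM; rewrite mulr_ge0 // (le_trans (eta''_ge0 0)) ?eta''_le.
rewrite uhatS; apply: (controlled_smax_step eta_smooth eta_abs eta''_ge0 _ eta''_le KM).
- exact: lam_gt0.
- by apply: lam_double_le => //; exact: ltW.
- exact: a_unit.
- exact/IH/ltnW.
Qed.
End UhatControl.

Theorem lemma2p8 (R : realType) (n q : nat) (a : nat -> 'rV[R]_n) (b : nat -> R)
    (eta : R -> R) :
  (3 <= n)%N ->
  (forall m, (m <= q)%N -> enorm (a m) = 1) ->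
  compact [set x : 'rV[R]_n | forall m, (m <= q)%N -> affine_fun (a m) (b m) x <= 0] ->
  (exists x0, interior
     [set x : 'rV[R]_n | forall m, (m <= q)%N -> affine_fun (a m) (b m) x <= 0] x0) ->
  smooth_fun eta ->
  (forall t, eta (- t) = eta t) ->
  (forall t, 2^-1 <= `|t| -> eta t = `|t|) ->
  (forall t, 0 <= derive1n 2 eta t) ->
  exists C : R, forall gamma lambda0 : R,
    0 < gamma -> gamma < 2^-1 -> 1 < lambda0 ->
    forall k, (k <= q)%N ->
      let f := uhat eta a b gamma lambda0 k in
      [/\ (forall x, differentiable f x /\ enorm (grad f x) <= C),
          convex_fun f &
          (forall x, (forall i, differentiable (fun y => derive f y (@evec R n i)) x) /\
             forall v w, `|bilin (hess f x) v w|
                          <= C * lam gamma lambda0 k * enorm v * enorm w)].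
Proof.
move=> _ a_unit _ _ eta_smooth _ eta_abs eta''_ge0.
have [M eta''_le] := eta''_bounded eta_smooth eta_abs eta''_ge0.
have M0 : 0 <= M := le_trans (eta''_ge0 0) (eta''_le 0).
exists (1 + 4 * M) => gamma lambda0 g0 g1 l1 k kq f.
have KM : 4 * M <= 1 + 4 * M by lra.
have l0 : 0 < lambda0 := lt_trans ltr01 l1.
have [f_diff Df_bd Df_diff D2f_bd f_cvx] := @controlled_uhat R n q a b eta M _ gamma
  lambda0 a_unit eta_smooth eta_abs eta''_ge0 eta''_le KM g0 (ltW g1) l0 k kq.
split=> [x|//|x]; split.
- exact: f_diff.
- apply: le_trans (enorm_grad_le ler01 (f_diff x) _) _; last lra.
  by move=> v; rewrite mul1r.
- by move=> i; exact: Df_diff.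
- by move=> v w; rewrite bilin_hess.
Qed.
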